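(* Let $R$ be a ring with identity, $(S,\leq)$ a strictly ordered monoid which is quasitotally ordered, and $\omega:S\to\mathrm{End}(R)$ a monoid homomorphism. Assume $R$ is $(S,\omega)$-Armendariz, and let $A=R[[S,\omega]]$. (1) If $A$ is a generalized right Baer ring, then $R$ is a generalized right Baer ring. (2) If moreover $R$ is $S$-compatible and $A$ is a generalized right quasi-Baer ring, then $R$ is a generalized right quasi-Baer ring.
   Context: All rings are associative with identity. For a nonempty subset $X$ of a ring $R$, $r_R(X)=\{a\in R : xa=0 \text{ for all } x\in X\}$ is its right annihilator, and for a positive integer $n$, $X^n$ denotes the set of all products $a_1a_2\cdots a_n$ with $a_i\in X$ for $1\le i\le n$. A ring $R$ is generalized right Baer if for every nonempty subset $X$ of $R$ there exist a positive integer $n$ (depending on $X$) and an idempotent $e\in R$ with $r_R(X^n)=eR$. A ring $R$ is generalized right quasi-Baer if for every right ideal $I$ of $R$ there exist a positive integer $n$ (depending on $I$) and an idempotent $e\in R$ with $r_R(I^n)=eR$. An ordered monoid $(S,\leq)$ is a monoid with a partial order such that $u\le v$ implies $ut\le vt$ and $tu\le tv$ for all $t\in S$; it is strictly ordered if $u<v$ implies $ut<vt$ and $tu<tv$ for all $t\in S$. It is quasitotally ordered if $\leq$ can be refined to an order $\preceq$ with respect to which $S$ is a strictly totally ordered monoid. A subset of $S$ is artinian if every strictly decreasing sequence in it is finite, and narrow if every subset of pairwise incomparable elements is finite. Given a ring $R$, a strictly ordered monoid $(S,\le)$ and a monoid homomorphism $\omega:S\to\mathrm{End}(R)$, $s\mapsto\omega_s$,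 the ring of skew generalized power series $R[[S,\omega]]$ is the set of all maps $f:S\to R$ whose support $\mathrm{supp}(f)=\{s\in S: f(s)\neq 0\}$ is artinian and narrow, with pointwise addition and multiplication $(fg)(s)=\sum_{(u,v)\in X_s(f,g)} f(u)\,\omega_u(g(v))$, where $X_s(f,g)=\{(u,v)\in S\times S: uv=s,\ f(u)\ne0,\ g(v)\ne0\}$ (a finite set; an empty sum is $0$). An endomorphism $\sigma$ of $R$ is compatible if for all $a,b\in R$: $ab=0 \iff a\sigma(b)=0$. $R$ is $S$-compatible if $\omega_s$ is compatible for every $s\in S$. $R$ is $(S,\omega)$-Armendariz if whenever $f,g\in R[[S,\omega]]$ satisfy $fg=0$, then $f(s)\,\omega_s(g(t))=0$ for all $s,t\in S$. *)

From HB Require Import structures.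
From mathcomp Require Import all_boot all_order all_algebra.
From mathcomp Require Import boolp classical_sets cardinality fsbigop.
Set Implicit Arguments. Unset Strict Implicit. Unset Printing Implicit Defensive.
Import GRing.Theory.
Local Open Scope classical_set_scope.
Local Open Scope ring_scope.

Section RingNotions.
Variables (T : Type) (P : set T) (add mul : T -> T -> T) (opp : T -> T)
  (zero : T).

Definition rann (X : set T) : set T :=
  [set a | P a /\ forall x, X x -> mul x a = zero].

(* X^(n.+1) : products a_1 ... a_(n+1) with a_i in X *)
Fixpoint setpow (X : set T) (n : nat) : set T :=
  match n with
  | 0 => X
  | n'.+1 => [set c | exists a b, X a /\ setpow X n' b /\ c = mul a b]
  end.

Definition idem (e : T) := P e /\ mul e e = e.

Definition prin_right (e : T) : set T :=
  [set b | exists r, P r /\ b = mul e r].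

Definition right_ideal (I : set T) : Prop :=
  I `<=` P /\ I zero /\ (forall x y, I x -> I y -> I (add x y)) /\
  (forall x, I x -> I (opp x)) /\ (forall x r, I x -> P r -> I (mul x r)).

Definition gen_right_Baer : Prop :=
  forall X : set T, X `<=` P -> X !=set0 ->
    exists n : nat, exists e : T, idem e /\ rann (setpow X n) = prin_right e.

Definition gen_right_quasi_Baer : Prop :=
  forall I : set T, right_ideal I ->
    exists n : nat, exists e : T, idem e /\ rann (setpow I n) = prin_right e.
End RingNotions.

Definition ring_gen_right_Baer (R : pzRingType) : Prop :=
  gen_right_Baer [set: R] (@GRing.mul R) 0.
Definition ring_gen_right_quasi_Baer (R : pzRingType) : Prop :=
  gen_right_quasi_Baer [set: R] (@GRing.add R) (@GRing.mul R) (fun x => - x) 0.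

Section OrderedMonoid.
Variables (S : Type) (op : S -> S -> S) (one : S).

Definition is_monoid : Prop :=
  (forall a b c, op a (op b c) = op (op a b) c) /\
  (forall a, op one a = a) /\ (forall a, op a one = a).

Definition is_partial_order (le : S -> S -> Prop) : Prop :=
  (forall a, le a a) /\ (forall a b, le a b -> le b a -> a = b) /\
  (forall a b c, le a b -> le b c -> le a c).

Definition lt_of (le : S -> S -> Prop) (a b : S) : Prop := le a b /\ a <> b.

Definition strictly_ordered_monoid (le : S -> S -> Prop) : Prop :=
  is_monoid /\ is_partial_order le /\
  (forall u v t, le u v -> le (op u t) (op v t) /\ le (op t u) (op t v)) /\
  (forall u v t, lt_of le u v ->
      lt_of le (op u t) (op v t) /\ lt_of le (op t u) (op t v)).

Definition quasitotally_ordered (le : S -> S -> Prop) : Prop :=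
  exists le' : S -> S -> Prop,
    (forall a b, le a b -> le' a b) /\
    (forall a b, le' a b \/ le' b a) /\
    strictly_ordered_monoid le'.

Definition artinian (le : S -> S -> Prop) (X : set S) : Prop :=
  ~ exists f : nat -> S, forall n, X (f n) /\ lt_of le (f n.+1) (f n).

Definition narrow (le : S -> S -> Prop) (X : set S) : Prop :=
  forall Y : set S, Y `<=` X ->
    (forall a b, Y a -> Y b -> a <> b -> ~ le a b /\ ~ le b a) ->
    finite_set Y.
End OrderedMonoid.

Section SGPS.
Variables (R : pzRingType) (S : choiceType) (op : S -> S -> S)
  (le : S -> S -> Prop) (omega : S -> {rmorphism R -> R}).

Definition supp (f : S -> R) : set S := [set s | f s != 0].

Definition is_sgps (f : S -> R) : Prop :=
  artinian le (supp f) /\ narrow le (supp f).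

Definition sgps_zero : S -> R := fun _ => 0.
Definition sgps_add (f g : S -> R) : S -> R := fun s => f s + g s.
Definition sgps_opp (f : S -> R) : S -> R := fun s => - f s.

Definition Xs (f g : S -> R) (s : S) : set (S * S) :=
  [set p | op p.1 p.2 = s /\ f p.1 != 0 /\ g p.2 != 0].

(* (fg)(s) = sum_{(u,v) in X_s(f,g)} f(u) omega_u(g(v))  (X_s finite for f,g in A) *)
Definition sgps_mul (f g : S -> R) : S -> R :=
  fun s => \sum_(p \in Xs f g s) f p.1 * omega p.1 (g p.2).

Definition sgps_gen_right_Baer : Prop :=
  gen_right_Baer is_sgps sgps_mul sgps_zero.
Definition sgps_gen_right_quasi_Baer : Prop :=
  gen_right_quasi_Baer is_sgps sgps_add sgps_mul sgps_opp sgps_zero.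

Definition SO_Armendariz : Prop :=
  forall f g : S -> R, is_sgps f -> is_sgps g ->
    sgps_mul f g = sgps_zero ->
    forall s t, f s * omega s (g t) = 0.
End SGPS.

Definition compatible_endo (R : pzRingType) (sigma : R -> R) : Prop :=
  forall a b : R, a * b = 0 <-> a * sigma b = 0.

Definition S_compatible (R : pzRingType) (S : Type) (omega : S -> {rmorphism R -> R}) :=
  forall s, compatible_endo (omega s).

Definition monoid_hom_omega (R : pzRingType) (S : Type) (op : S -> S -> S) (one : S)
  (omega : S -> {rmorphism R -> R}) : Prop :=
  (forall x, omega one x = x) /\
  (forall s t x, omega (op s t) x = omega s (omega t x)).

From HB Require Import structures.
From mathcomp Require Import all_boot all_order all_algebra.
From mathcomp Require Import boolp classical_sets cardinality fsbigop.
From mathcomp Require Import functions finmap.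
Import GRing.Theory.

(* Constant series embed R multiplicatively into A = R[[S, omega]].  Given
   X of R (resp. a right ideal I), apply the hypothesis on A to the constant
   series of X (resp. to the right ideal of series with all coefficients in I)
   to get r_A(X'^n) = eA with e idempotent.  Since (1 - e) e = 0, the
   Armendariz property gives e(t) = e(1) e(t) for every t, so e(1) is
   idempotent, and comparing constant coefficients yields r_R(X^n) = e(1) R.
   In the quasi-Baer case S-compatibility transfers the annihilation of I^n
   to the coefficients of every element of I'^n.  That A is closed under the
   ring operations and that every X_s(f, g) is finite rests on the fact that a
   set is artinian and narrow iff every sequence in it has indices i < j with
   x_i <= x_j. *)

Local Open Scope classical_set_scope.

Lemma infinite_set_seq {T : Type} {Y : set T} : infinite_set Y ->
  exists2 f : nat -> T, injective f & forall k, Y (f k).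
Proof.
move=> /infiniteP /card_leP [g].
pose f n := val (g (@SigSub _ _ [set: nat] n (mem_set I))).
exists f => [a b /val_inj /(inj (mem_set I) (mem_set I))|k]; first by case.
exact: set_valP.
Qed.

Lemma injective_seq_infinite {T : Type} {Y : set T} {f : nat -> T} :
  injective f -> (forall k, Y (f k)) -> infinite_set Y.
Proof.
move=> inj_f Yf /(finite_preimage (in2W inj_f)) fin.
by apply: infinite_nat; apply: sub_finite_set fin => k _; apply: Yf.
Qed.

Lemma iter_choice (N : nat) (G : nat -> nat -> Prop) :
  (forall n, N <= n -> exists2 m, n < m & G n m) ->
  exists psi : nat -> nat,
    psi 0 = N /\ forall k, psi k < psi k.+1 /\ G (psi k) (psi k.+1).
Proof.
move=> HG; have /choice [next Hnext] :
    forall n, exists m, N <= n -> n < m /\ G n m.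
  move=> n.
  have [Nn|Nn] := boolP (N <= n); last by exists 0 => NNn; case/negP: Nn.
  by have [m ltnm Gnm] := HG n Nn; exists m.
exists (fun k => iter k next N); split => // k.
suff Nk : N <= iter k next N by apply: Hnext.
elim: k => //= k IH; exact: leq_trans IH (ltnW (Hnext _ IH).1).
Qed.

Lemma dead_ends_or_chain (Q : nat -> nat -> Prop) :
  (exists phi : nat -> nat, (forall k, phi k < phi k.+1) /\
     forall k j, phi k < j -> ~ Q (phi k) j) \/
  (exists psi : nat -> nat, forall k, psi k < psi k.+1 /\ Q (psi k) (psi k.+1)).
Proof.
pose dead n := forall j, n < j -> ~ Q n j.
have [Hdead|] := pselect (forall N, exists2 n, N <= n & dead n).
  left; have [n0 _ dead_n0] := Hdead 0.
  have [phi [phi0 Hphi]] : exists phi : nat -> nat,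
      phi 0 = n0 /\ forall k, phi k < phi k.+1 /\ dead (phi k.+1).
    by apply: (iter_choice n0 (fun _ m => dead m)) => n _; exact: Hdead n.+1.
  exists phi; split => [k|]; first exact: (Hphi k).1.
  by case=> [|k]; [rewrite phi0 | apply: (Hphi k).2].
move=> /existsNP [N notdead]; right.
have [n Nn|psi [_ Hpsi]] := iter_choice N Q; last by exists psi.
apply: contrapT => noQ; apply: notdead.
by exists n => // j nj Qnj; apply: noQ; exists j.
Qed.

Definition pwo {S : Type} (le : S -> S -> Prop) (X : set S) : Prop :=
  forall x : nat -> S, (forall n, X (x n)) ->
    exists i j, i < j /\ le (x i) (x j).

Section PartiallyWellOrdered.
Context {S : Type} {le : S -> S -> Prop}.

Lemma pwo_subset {A B : set S} : A `<=` B -> pwo le B -> pwo le A.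
Proof. by move=> AB WB x Ax; apply: WB => n; apply: AB. Qed.

Lemma pwo_setU {A B : set S} : pwo le A -> pwo le B -> pwo le (A `|` B).
Proof.
move=> WA WB x ABx.
case: (dead_ends_or_chain (fun _ j => A (x j))) => [[phi [_ noA]]|[psi Hpsi]].
  pose shift k := k + (phi 0).+1.
  have Bx k : B (x (shift k)).
    by case: (ABx (shift k)) => // Ax; case: (noA 0 (shift k) (ltn_addl _ _)).
  have [i [j [ij le_ij]]] := WB (x \o shift) Bx.
  by exists (shift i), (shift j); rewrite ltn_add2r.
have [i [j [ij le_ij]]] := WA (fun k => x (psi k.+1)) (fun k => (Hpsi k).2).
exists (psi i.+1), (psi j.+1); split => //.
exact: (homo_ltn ltn_trans (fun k => (Hpsi k).1)).
Qed.

Hypothesis le_refl : forall a, le a a.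
Hypothesis le_anti : forall a b, le a b -> le b a -> a = b.
Hypothesis le_trans : forall b a c, le a b -> le b c -> le a c.

Lemma pwo_set1 (c : S) : pwo le [set c].
Proof. by move=> x Hx; exists 0, 1; rewrite (Hx 0) (Hx 1). Qed.

Lemma pwo_chain {X : set S} {x : nat -> S} :
  pwo le X -> (forall n, X (x n)) ->
  exists psi : nat -> nat,
    forall k, psi k < psi k.+1 /\ le (x (psi k)) (x (psi k.+1)).
Proof.
move=> WX Xx.
case: (dead_ends_or_chain (fun n j => le (x n) (x j))) => [[phi [inc dead]]|//].
have [i [j [ij le_ij]]] := WX (x \o phi) (fun k => Xx _).
by case: (dead i (phi j) (homo_ltn ltn_trans inc ij)).
Qed.

Lemma pwo_pair {A B : set S} {a b : nat -> S} : pwo le A -> pwo le B ->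
  (forall n, A (a n)) -> (forall n, B (b n)) ->
  exists i j, [/\ i < j, le (a i) (a j) & le (b i) (b j)].
Proof.
move=> WA WB Aa Bb; have [psi Hpsi] := pwo_chain WA Aa.
have [i [j [ij le_ij]]] := WB (b \o psi) (fun k => Bb _).
exists (psi i), (psi j); split => //.
  exact: (homo_ltn ltn_trans (fun k => (Hpsi k).1)).
exact: (homo_ltn le_trans (fun k => (Hpsi k).2)).
Qed.

Lemma pwo_artinian {X : set S} : pwo le X -> artinian le X.
Proof.
move=> WX [f Hf]; have [i [j [ij le_ij]]] := WX f (fun n => (Hf n).1).
have lt_trans : forall b a c, lt_of le b a -> lt_of le c b -> lt_of le c a.
  move=> b a c [le_ba ne_ba] [le_cb ne_cb].
  split; first exact: le_trans le_cb le_ba.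
  by move=> eq_ca; apply: ne_ba; apply: le_anti le_ba _; rewrite -eq_ca.
have [le_ji ne_ji] := homo_ltn lt_trans (fun n => (Hf n).2) ij.
by apply: ne_ji; apply: le_anti le_ji le_ij.
Qed.

Lemma pwo_narrow {X : set S} : pwo le X -> narrow le X.
Proof.
move=> WX Y YX incomp; apply: contrapT => /infinite_set_seq [f inj_f Yf].
have [i [j [ij le_ij]]] := WX f (fun n => YX _ (Yf n)).
have ne_ij : f i <> f j by move=> /inj_f eq_ij; rewrite eq_ij ltnn in ij.
by have [] := incomp _ _ (Yf i) (Yf j) ne_ij.
Qed.

Lemma artinian_narrow_pwo {X : set S} :
  artinian le X -> narrow le X -> pwo le X.
Proof.
move=> art nar x Xx; apply: contrapT => good.
have bad i j : i < j -> ~ le (x i) (x j).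
  by move=> ij le_ij; apply: good; exists i, j.
case: (dead_ends_or_chain (fun n j => lt_of le (x j) (x n))) =>
  [[phi [inc dead]]|[psi Hpsi]]; last first.
  by apply: art; exists (x \o psi) => k; split; [apply: Xx | apply: (Hpsi k).2].
have phi_mono := homo_ltn ltn_trans inc.
have incomp k l : k < l ->
    ~ le (x (phi k)) (x (phi l)) /\ ~ le (x (phi l)) (x (phi k)).
  move=> kl; have ph := phi_mono _ _ kl; split; first exact: bad.
  move=> le_lk; apply: (dead k _ ph); split => // eq_lk.
  by apply: (bad _ _ ph); rewrite eq_lk.
have neq k l : k != l -> x (phi k) <> x (phi l).
  rewrite neq_ltn => /orP[] kl eq_kl; have [] := incomp _ _ kl; rewrite eq_kl //.
apply: (@injective_seq_infinite _ (range (x \o phi)) (x \o phi)).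
- by move=> k l eq_kl; apply/eqP; apply: contraPT eq_kl => /neq.
- by move=> k; exists k.
apply: nar => [_ [k _ <-]|_ _ [k _ <-] [l _ <-] ne_kl]; first exact: Xx.
have : k != l by apply: contraPneq ne_kl => ->.
by rewrite neq_ltn => /orP[] /incomp [].
Qed.

End PartiallyWellOrdered.

Lemma setpow_subset {T : Type} {mul : T -> T -> T} {X Y : set T} {k : nat} :
  X `<=` Y -> setpow mul X k `<=` setpow mul Y k.
Proof.
move=> XY; elim: k => [|k IH] //= _ [a [b [Xa [Xb ->]]]].
by exists a, b; split; [apply: XY | split => //; apply: IH].
Qed.

Lemma setpow_image {T U : Type} {mulT : T -> T -> T} {mulU : U -> U -> U}
    (phi : T -> U) (X : set T) (k : nat) :
  (forall a b, phi (mulT a b) = mulU (phi a) (phi b)) ->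
  setpow mulU (phi @` X) k = phi @` setpow mulT X k.
Proof.
move=> phiM; elim: k => [|k IH] //=; rewrite IH; apply/seteqP; split.
  move=> _ [_ [_ [[a Xa <-] [[b Xb <-] ->]]]].
  by exists (mulT a b); [exists a, b | rewrite phiM].
move=> _ [_ [a [b [Xa [Xb ->]]]] <-].
by exists (phi a), (phi b); split; [exists a | split; [exists b | rewrite phiM]].
Qed.

Section StrictlyOrderedMonoid.
Context {S : Type} {op : S -> S -> S} {le : S -> S -> Prop}.
Hypothesis Hpo : is_partial_order le.
Hypothesis Hmono :
  forall u v t, le u v -> le (op u t) (op v t) /\ le (op t u) (op t v).
Hypothesis Hstrict : forall u v t,
  lt_of le u v -> lt_of le (op u t) (op v t) /\ lt_of le (op t u) (op t v).

Lemma lt_op_pair {u v u' v' : S} :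
  le u u' -> le v v' -> (u, v) <> (u', v') -> lt_of le (op u v) (op u' v').
Proof.
have [_ [le_anti le_trans]] := Hpo.
move=> le_u le_v ne; have [eq_u|ne_u] := pselect (u = u').
  have ne_v : v <> v' by move=> eq_v; apply: ne; rewrite eq_u eq_v.
  by rewrite eq_u; apply: (Hstrict v v' u' (conj le_v ne_v)).2.
have [le_uv ne_uv] := (Hstrict u u' v (conj le_u ne_u)).1.
have le_v' := (Hmono v v' u' le_v).2; split; first exact: le_trans le_uv le_v'.
by move=> eq_uv; apply: ne_uv; apply: le_anti le_uv _; rewrite eq_uv.
Qed.

Lemma pwo_op_image {A B : set S} :
  pwo le A -> pwo le B -> pwo le [set op u v | u in A & v in B].
Proof.
have [_ [_ le_trans]] := Hpo.
move=> WA WB z Hz; have /choice [uv Huv] :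
    forall n, exists p : S * S, A p.1 /\ B p.2 /\ op p.1 p.2 = z n.
  by move=> n; have [u Au [v Bv <-]] := Hz n; exists (u, v).
have [i [j [ij le_u le_v]]] := pwo_pair (fun b a c => le_trans a b c) WA WB
  (fun n => (Huv n).1) (fun n => (Huv n).2.1).
exists i, j; split => //; rewrite -(Huv i).2.2 -(Huv j).2.2.
exact: le_trans (Hmono _ _ _ le_u).1 (Hmono _ _ _ le_v).2.
Qed.

End StrictlyOrderedMonoid.

Local Open Scope ring_scope.

Section SkewSeries.
Context {R : pzRingType} {S : choiceType} (op : S -> S -> S) (one : S)
  (le : S -> S -> Prop) (omega : S -> {rmorphism R -> R}).
Hypothesis Hmon : is_monoid op one.
Hypothesis Hpo : is_partial_order le.
Hypothesis Hmono :
  forall u v t, le u v -> le (op u t) (op v t) /\ le (op t u) (op t v).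
Hypothesis Hstrict : forall u v t,
  lt_of le u v -> lt_of le (op u t) (op v t) /\ lt_of le (op t u) (op t v).
Hypothesis Hom : monoid_hom_omega op one omega.

Local Notation mul := (sgps_mul op omega).
Local Notation is_sgps := (is_sgps le).
Local Notation sgps0 := (@sgps_zero R S).

Let le_trans : forall b a c, le a b -> le b c -> le a c :=
  fun b a c => Hpo.2.2 a b c.

Definition sgpsC (a : R) : S -> R := fun s => if s == one then a else 0.

Definition sgps_term (f g : S -> R) (s : S) (p : S * S) : R :=
  if op p.1 p.2 == s then f p.1 * omega p.1 (g p.2) else 0.

Lemma sgps_term0 (f g : S -> R) s p :
  ~ Xs op f g s p -> sgps_term f g s p = 0.
Proof.
rewrite /sgps_term; case: eqP => // ops notX.
have [f0|fn0] := eqVneq (f p.1) 0; first by rewrite f0 mul0r.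
have [g0|gn0] := eqVneq (g p.2) 0; first by rewrite g0 rmorph0 mulr0.
by case: notX.
Qed.

Lemma sgps_mulE (f g : S -> R) s :
  mul f g s = \sum_(p \in [set: S * S]) sgps_term f g s p.
Proof.
rewrite /sgps_mul fsbig_mkcond; apply: eq_fsbigr => p _; rewrite /patch.
case: (boolP (p \in Xs op f g s)) => [|/negP]; rewrite in_setE.
  by move=> [ops _]; rewrite /sgps_term ops eqxx.
by move=> notX; rewrite sgps_term0.
Qed.

Lemma fsumT_single (T : choiceType) (F : T -> R) (q : T) :
  (forall p, p <> q -> F p = 0) -> \sum_(p \in [set: T]) F p = F q.
Proof.
move=> Fq; rewrite -(fsbig_widen [set q]) ?fsbig_set1 // => p [_ /= ne_pq].
exact: Fq.
Qed.

Lemma sgps_mulCl a (g : S -> R) : mul (sgpsC a) g = fun s => a * g s.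
Proof.
have [_ [op1s _]] := Hmon; have [omega1 _] := Hom.
apply/funext => s; rewrite sgps_mulE (@fsumT_single _ _ (one, s)).
  by rewrite /sgps_term /sgpsC /= op1s !eqxx omega1.
move=> [u v] ne; rewrite /sgps_term /sgpsC /=.
case: (u =P one) => [eq_u|_]; last by rewrite mul0r if_same.
rewrite eq_u op1s; case: (v =P s) => // eq_v.
by exfalso; apply: ne; rewrite eq_u eq_v.
Qed.

Lemma sgps_mulCr (h : S -> R) b : mul h (sgpsC b) = fun s => h s * omega s b.
Proof.
have [_ [_ ops1]] := Hmon.
apply/funext => s; rewrite sgps_mulE (@fsumT_single _ _ (s, one)).
  by rewrite /sgps_term /sgpsC /= ops1 !eqxx.
move=> [u v] ne; rewrite /sgps_term /sgpsC /=.
case: (v =P one) => [eq_v|_]; last by rewrite rmorph0 mulr0 if_same.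
rewrite eq_v ops1; case: (u =P s) => // eq_u.
by exfalso; apply: ne; rewrite eq_u eq_v.
Qed.

Lemma sgpsC_mul a b : mul (sgpsC a) (sgpsC b) = sgpsC (a * b).
Proof.
rewrite sgps_mulCl; apply/funext => s.
by rewrite /sgpsC; case: ifP; rewrite ?mulr0.
Qed.

Lemma sgpsC0 : sgpsC 0 = sgps0.
Proof. by apply/funext => s; rewrite /sgpsC if_same. Qed.

Lemma supp_sgps_mul (f g : S -> R) :
  supp (mul f g) `<=` [set op u v | u in supp f & v in supp g].
Proof.
move=> s /eqP fgs; apply: contrapT => notprod; apply: fgs.
apply: fsbig1 => -[u v] [/= ops [fu gv]]; exfalso; apply: notprod.
by exists u => //; exists v.
Qed.

Lemma is_sgpsP (f : S -> R) : is_sgps f <-> pwo le (supp f).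
Proof.
have [le_refl [le_anti _]] := Hpo.
split => [[art nar]|W]; first exact: artinian_narrow_pwo.
split; last exact: pwo_narrow.
exact: (pwo_artinian le_anti le_trans W).
Qed.

Lemma is_sgpsC a : is_sgps (sgpsC a).
Proof.
apply/is_sgpsP; apply: pwo_subset (pwo_set1 Hpo.1 one) => s.
by rewrite /supp /sgpsC /=; case: (s =P one) => // _; rewrite eqxx.
Qed.

Lemma is_sgps0 : is_sgps sgps0.
Proof. by rewrite -sgpsC0; apply: is_sgpsC. Qed.

Lemma is_sgpsD {f g : S -> R} :
  is_sgps f -> is_sgps g -> is_sgps (sgps_add f g).
Proof.
move=> /is_sgpsP Wf /is_sgpsP Wg; apply/is_sgpsP.
apply: pwo_subset (pwo_setU Wf Wg) => s; rewrite /supp /sgps_add /=.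
by have [->|] := eqVneq (f s) 0; [rewrite add0r; right | left].
Qed.

Lemma is_sgpsN {f : S -> R} : is_sgps f -> is_sgps (sgps_opp f).
Proof.
move=> /is_sgpsP Wf; apply/is_sgpsP; apply: pwo_subset Wf => s.
by rewrite /supp /sgps_opp /= oppr_eq0.
Qed.

Lemma is_sgpsM {f g : S -> R} : is_sgps f -> is_sgps g -> is_sgps (mul f g).
Proof.
move=> /is_sgpsP Wf /is_sgpsP Wg; apply/is_sgpsP.
exact: pwo_subset (@supp_sgps_mul f g) (pwo_op_image Hpo Hmono Wf Wg).
Qed.

Lemma finite_Xs {f g : S -> R} (s : S) :
  is_sgps f -> is_sgps g -> finite_set (Xs op f g s).
Proof.
move=> /is_sgpsP Wf /is_sgpsP Wg; apply: contrapT.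
move=> /infinite_set_seq [p inj_p Xp].
have [i [j [ij le_u le_v]]] := pwo_pair le_trans Wf Wg
  (fun n => (Xp n).2.1) (fun n => (Xp n).2.2).
have ne_ij : ((p i).1, (p i).2) <> ((p j).1, (p j).2).
  by rewrite -!surjective_pairing => /inj_p eq_ij; rewrite eq_ij ltnn in ij.
have [_] := lt_op_pair Hpo Hmono Hstrict le_u le_v ne_ij.
by rewrite (Xp i).1 (Xp j).1.
Qed.

Lemma sgps_mulBl {f g h : S -> R} : is_sgps f -> is_sgps g -> is_sgps h ->
  mul (fun s => f s - g s) h = fun s => mul f h s - mul g h s.
Proof.
move=> Sf Sg Sh; apply/funext => s; rewrite !sgps_mulE.
pose D := Xs op f h s `|` Xs op g h s.
have finD : finite_set D by rewrite finite_setU; split; apply: finite_Xs.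
have sumD (F : S * S -> R) : (forall p, ~ D p -> F p = 0) ->
    \sum_(p \in [set: S * S]) F p = \sum_(p <- fset_set D) F p.
  move=> FD; apply: (fsbigTE (fset_set D)) => p.
  by rewrite in_fset_set // notin_setE; apply: FD.
have term0D1 p : ~ D p -> sgps_term f h s p = 0.
  by move=> notD; apply: sgps_term0 => X1; apply: notD; left.
have term0D2 p : ~ D p -> sgps_term g h s p = 0.
  by move=> notD; apply: sgps_term0 => X2; apply: notD; right.
have termB p : sgps_term (fun s => f s - g s) h s p =
    sgps_term f h s p - sgps_term g h s p.
  by rewrite /sgps_term; case: ifP; rewrite ?subr0 // mulrBl.
rewrite !sumD; first by rewrite -sumrB; apply: eq_bigr => p _; apply: termB.
all: by move=> p notD; rewrite ?termB ?term0D1 ?term0D2 ?subr0.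
Qed.

Lemma setpow_sgpsC (X : set R) (n : nat) :
  setpow mul (sgpsC @` X) n = sgpsC @` setpow *%R X n.
Proof. by apply: setpow_image => a b; rewrite sgpsC_mul. Qed.

Hypothesis Harm : SO_Armendariz op le omega.

(* Armendariz applied to [(1 - e) e = 0]. *)
Lemma sgps_idem_coef {e : S -> R} : is_sgps e -> mul e e = e ->
  forall t, e t = e one * e t.
Proof.
have [omega1 _] := Hom; move=> Se ee t.
pose f s := sgpsC 1 s - e s.
have Sf : is_sgps f := is_sgpsD (is_sgpsC 1) (is_sgpsN Se).
have fe0 : mul f e = sgps0.
  rewrite (sgps_mulBl (is_sgpsC 1) Se Se) sgps_mulCl ee.
  by apply/funext => s; rewrite mul1r subrr.
have := Harm _ _ Sf Se fe0 one t.
by rewrite /f /sgpsC eqxx omega1 mulrBl mul1r => /eqP; rewrite subr_eq0 => /eqP.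
Qed.

Lemma rann_setpow_descent (X : set R) (X' : set (S -> R)) (n : nat)
    (e : S -> R) :
  is_sgps e -> mul e e = e -> sgpsC @` X `<=` X' ->
  (forall b, rann [set: R] *%R 0 (setpow *%R X n) b ->
     forall h, setpow mul X' n h -> mul h (sgpsC b) = sgps0) ->
  rann is_sgps mul sgps0 (setpow mul X' n) = prin_right is_sgps mul e ->
  idem [set: R] *%R (e one) /\
  rann [set: R] *%R 0 (setpow *%R X n) = prin_right [set: R] *%R (e one).
Proof.
move=> Se ee CX' annC Heq; have e_coef := sgps_idem_coef Se ee.
have [_ ann_e] : rann is_sgps mul sgps0 (setpow mul X' n) e.
  by rewrite Heq; exists e; rewrite ee.
have CXn : sgpsC @` setpow *%R X n `<=` setpow mul X' n.
  by rewrite -setpow_sgpsC; apply: setpow_subset.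
split; first by split => //; rewrite -e_coef.
apply/seteqP; split => [b annb|_ [r [_ ->]]].
  have : rann is_sgps mul sgps0 (setpow mul X' n) (sgpsC b).
    by split; [apply: is_sgpsC | apply: annC].
  rewrite Heq => -[r [_ /(congr1 (fun f => f one))]].
  rewrite /sgpsC eqxx => ->; exists (mul e r one); split => //.
  rewrite /sgps_mul big_distrr; apply: eq_bigr => p _.
  by rewrite /= mulrA -e_coef.
split => // x xX; have := ann_e _ (CXn _ (imageP sgpsC xX)).
move=> /(congr1 (fun f => f one)); rewrite sgps_mulCl => x_e1.
by rewrite mulrA x_e1 mul0r.
Qed.

Lemma gen_right_Baer_of_sgps :
  sgps_gen_right_Baer op le omega -> ring_gen_right_Baer R.
Proof.
move=> HA X _ [x0 Xx0].
have CX : sgpsC @` X `<=` is_sgps by move=> _ [a _ <-]; apply: is_sgpsC.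
have [n [e [[Se ee] Heq]]] := HA _ CX (ex_intro _ _ (imageP sgpsC Xx0)).
exists n, (e one); apply: rann_setpow_descent Se ee _ _ Heq => // b [_ annb] h.
by rewrite setpow_sgpsC => -[x xX <-]; rewrite sgpsC_mul annb // sgpsC0.
Qed.

Definition sgps_over (X : set R) : set (S -> R) :=
  [set f | is_sgps f /\ forall s, X (f s)].

Lemma sgps_over_right_ideal {I : set R} :
  right_ideal [set: R] +%R *%R (fun x => - x) 0 I ->
  right_ideal is_sgps (@sgps_add R S) mul (@sgps_opp R S) sgps0
    (sgps_over I).
Proof.
move=> [_ [I0 [ID [IN IM]]]]; split; first by move=> f [].
split; first by split; [apply: is_sgps0 | move=> s; apply: I0].
split.
  by move=> f g [Sf If] [Sg Ig]; split; [apply: is_sgpsD | move=> s; apply: ID].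
split; first by move=> f [Sf If]; split; [apply: is_sgpsN | move=> s; apply: IN].
move=> f r [Sf If] Sr; split; first exact: is_sgpsM.
by move=> s; apply: big_ind => // p _; apply: IM.
Qed.

Hypothesis Hcompat : S_compatible omega.

(* Compatibility lets each [omega_u] be erased from [x f(u) omega_u(g(v)) c]. *)
Lemma sgps_over_setpow_coef {X : set R} {k : nat} {h : S -> R} {x c : R} :
  setpow mul (sgps_over X) k h ->
  (forall y, setpow *%R X k y -> x * y * c = 0) -> forall s, x * h s * c = 0.
Proof.
elim: k h x => [|k IH] h x /=; first by move=> [_ Xh] Hy s; apply: Hy.
move=> [f [g [[_ Xf] [Hg ->]]]] Hy s.
rewrite /sgps_mul big_distrr big_distrl; apply: big1 => p _ /=.
rewrite mulrA; apply/(Hcompat p.1 _ _).2; rewrite -mulrA -rmorphM.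
apply/(Hcompat p.1 _ _).1; rewrite mulrA.
apply: (IH g _ Hg) => y Hy'; rewrite -(mulrA x); apply: Hy.
by exists (f p.1), y.
Qed.

Lemma gen_right_quasi_Baer_of_sgps :
  sgps_gen_right_quasi_Baer op le omega -> ring_gen_right_quasi_Baer R.
Proof.
move=> HA I rI; have [_ [I0 _]] := rI.
have [n [e [[Se ee] Heq]]] := HA _ (sgps_over_right_ideal rI).
exists n, (e one); apply: rann_setpow_descent Se ee _ _ Heq.
  move=> _ [a Ia <-]; split; first exact: is_sgpsC.
  by move=> s; rewrite /sgpsC; case: ifP.
move=> b [_ annb] h hI; rewrite sgps_mulCr; apply/funext => s.
apply/(Hcompat s _ _).1; rewrite -[h s]mul1r.
by apply: (sgps_over_setpow_coef hI) => y Iy; rewrite mul1r annb.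
Qed.

End SkewSeries.

Theorem proposition3p5 (R : pzRingType) (S : choiceType) (op : S -> S -> S)
  (one : S) (le : S -> S -> Prop) (omega : S -> {rmorphism R -> R})
  (HS : strictly_ordered_monoid op one le)
  (Hqt : quasitotally_ordered op one le)
  (Hom : monoid_hom_omega op one omega)
  (Harm : SO_Armendariz op le omega) :
  (sgps_gen_right_Baer op le omega -> ring_gen_right_Baer R) /\
  (S_compatible omega -> sgps_gen_right_quasi_Baer op le omega ->
     ring_gen_right_quasi_Baer R).
Proof.
have [Hmon [Hpo [Hmono Hstrict]]] := HS.
split; first exact: gen_right_Baer_of_sgps Hmon Hpo Hmono Hstrict Hom Harm.
move=> Hcompat.
exact: gen_right_quasi_Baer_of_sgps Hmon Hpo Hmono Hstrict Hom Harm Hcompat.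
Qed.
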